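(* Let $\alpha_1,\dots,\alpha_n\in\Gamma$ be linearly independent over $\mathbb{R}$. Let $A$ be the $n\times n$ matrix of $1$-forms defined in the context, fix $i\neq j$ in $\{1,\dots,n\}$, and fix an integer $p\ge3$. Suppose that either $\operatorname{len}(\alpha_j-\alpha_i)\ge p$, or both of the following hold: (Q) for all $k\notin\{i,j\}$, $$\langle\alpha_j,\alpha_i\rangle\langle\alpha_j-\alpha_k,\alpha_k-\alpha_i\rangle=\langle\alpha_j,\alpha_k\rangle\langle\alpha_k,\alpha_i\rangle;$$ (V) for every ordered pair $(\beta,\gamma)$ of nonzero elements of $\Gamma$ with $\beta+\gamma=\alpha_j-\alpha_i$ that is not of the form $(\alpha_j-\alpha_k,\alpha_k-\alpha_i)$ or $(\alpha_k-\alpha_i,\alpha_j-\alpha_k)$ for some $k\notin\{i,j\}$, one has $\langle\beta,\gamma\rangle f^\beta f^\gamma\in(\mathbf{s})^p$. Then the $(j,i)$ entry of the curvature matrix $F=dA+A\wedge A$ lies in $(\mathbf{s})^p$, i.e. it vanishes modulo terms of order at least $p$ in $\mathbf{s}$.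
   Context: Let $\Gamma\cong\mathbb{Z}^n$ be a lattice with basis $[S_1],\dots,[S_n]$, and let $\langle-,-\rangle:\Gamma\times\Gamma\to\mathbb{Z}$ be a skew-symmetric bilinear form. For $\alpha=\sum_i a_i[S_i]$ set $\operatorname{len}(\alpha)=\sum_i|a_i|$. Let $U\subset\operatorname{Hom}(\Gamma,\mathbb{C})$ be a connected open set; for $\alpha\in\Gamma$, $Z(\alpha)$ is a linear holomorphic function on $U$. Let $\mathbf{s}=(s_1,\dots,s_n)$ be formal variables, and let $R$ be the ring of formal power series in $\mathbf{s}$ with coefficients holomorphic on $U$. Differential forms with coefficients in $R$ are power series in $\mathbf{s}$ whose coefficients are holomorphic forms, and $d$ acts coefficientwise. $(\mathbf{s})^p$ denotes the series (or forms) all of whose monomials have total degree at least $p$. Let $\{f^\alpha\}_{\alpha\in\Gamma\setminus\{0\}}\subset R$ satisfy: (i) $f^\alpha\in(\mathbf{s})^{\operatorname{len}(\alpha)}$; (ii) if $f^\alpha\neq0$ then $Z(\alpha)$ is nowhere zero on $U$; (iii) the Joyce PDE $$df^\alpha=-\sum_{\beta+\gamma=\alpha,\ \beta,\gamma\neq0}(-1)^{\langle\beta,\gamma\rangle}\langle\beta,\gamma\rangle f^\beta f^\gamma\, d\log Z(\beta)$$ holds. Here the sum is over ordered pairs and is $\mathbf{s}$-adically convergent by (i). Given $\alpha_1,\dots,\alpha_n$, define the $n\times n$ matrix of $1$-forms $A$ by $A_{kk}=0$ and, for $k\neq l$, $$A_{kl}=(-1)^{\langle\alpha_k,\alpha_l\rangle}\langle\alpha_k,\alpha_l\rangle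 f^{\alpha_k-\alpha_l}\,d\log Z(\alpha_k-\alpha_l),$$ with $A_{kl}=0$ when $f^{\alpha_k-\alpha_l}=0$. *)

From HB Require Import structures.
From mathcomp Require Import all_boot all_order all_algebra.
Set Implicit Arguments. Unset Strict Implicit. Unset Printing Implicit Defensive.
Import GRing.Theory Num.Theory.
Local Open Scope ring_scope.

(* Monomials s^m in the formal variables s_1..s_n, and their total degree. *)
Definition mono (n : nat) := 'I_n -> nat.
Definition mdeg (n : nat) (m : mono n) : nat := (\sum_(r < n) m r)%N.

(* Formal power series in s with coefficients in the ring H
   (H = holomorphic functions on U): coefficient functions. *)
Definition PS (H : Type) (n : nat) := mono n -> H.

Definition mulPS (H : comPzRingType) (n : nat) (f g : PS H n) : PS H n :=
  fun m => \sum_(a : {ffun 'I_n -> 'I_(mdeg m).+1} | [forall r, (a r <= m r)%N])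
             f (fun r => nat_of_ord (a r)) * g (fun r => (m r - a r)%N).

Definition inSp (H : nmodType) (n : nat) (p : nat) (f : PS H n) : Prop :=
  forall m : mono n, (mdeg m < p)%N -> f m = 0.

(* Lattice Gamma = Z^n (row vectors in the basis [S_1..S_n]); skew form given by
   its Gram matrix Om. *)
Definition pairing (n : nat) (Om : 'M[int]_n) (b c : 'rV[int]_n) : int :=
  (b *m Om *m c^T) 0 0.
Definition len (n : nat) (a : 'rV[int]_n) : nat := (\sum_(r < n) `|a ord0 r|)%N.

Definition sgn (H : pzRingType) (x : int) : H := (-1) ^+ `|x|%N.
Definition cf (H : pzRingType) (n : nat) (Om : 'M[int]_n) (b c : 'rV[int]_n) : H :=
  sgn H (pairing Om b c) * (pairing Om b c)%:~R.

(* Central charge Z(b) = sum_r b_r z_r, z_r = Z([S_r]) the coordinate functions. *)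
Definition Zc (H : pzRingType) (n : nat) (z : 'I_n -> H) (b : 'rV[int]_n) : H :=
  \sum_(r < n) (b ord0 r)%:~R * z r.
(* dz_r-coefficient of d log Z(b) = Z(b)^{-1} dZ(b). *)
Definition dlogZ (H : comUnitRingType) (n : nat) (z : 'I_n -> H) (b : 'rV[int]_n)
  (r : 'I_n) : H := (Zc z b)^-1 * (b ord0 r)%:~R.

Definition boxvec (n D : nat) (x : {ffun 'I_n -> 'I_(2 * D).+1}) : 'rV[int]_n :=
  \row_r ((x r)%:Z - D%:Z).

(* dz_r-coefficient of the right-hand side of the Joyce PDE, coefficient of s^m.
   Thanks to hypothesis (i), only pairs with len b, len c <= deg m contribute
   to the coefficient of s^m, so the s-adically convergent sum equals this
   finite sum over the box |b_r| <= deg m. *)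
Definition joyce_rhs (H : comUnitRingType) (n : nat) (Om : 'M[int]_n)
  (z : 'I_n -> H) (f : 'rV[int]_n -> PS H n) (a : 'rV[int]_n) (r : 'I_n) : PS H n :=
  fun m => - \sum_(x : {ffun 'I_n -> 'I_(2 * mdeg m).+1})
     (let b := boxvec x in let c := a - b in
      if (b != 0) && (c != 0)
      then cf H Om b c * mulPS (f b) (f c) m * dlogZ z b r else 0).

Definition dPS (H : Type) (n : nat) (D : 'I_n -> H -> H) (r : 'I_n) (g : PS H n)
  : PS H n := fun m => D r (g m).

(* dz_r-coefficient of the 1-form A_{kl}. *)
Definition Amat (H : comUnitRingType) (n : nat) (Om : 'M[int]_n) (z : 'I_n -> H)
  (f : 'rV[int]_n -> PS H n) (alpha : 'I_n -> 'rV[int]_n) (k l r : 'I_n) : PS H n :=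
  fun m => if k == l then 0
           else cf H Om (alpha k) (alpha l) * f (alpha k - alpha l) m
                * dlogZ z (alpha k - alpha l) r.

(* dz_r ^ dz_t - coefficient of F_{jl} = (dA + A ^ A)_{jl}. *)
Definition curv (H : comUnitRingType) (n : nat) (Om : 'M[int]_n) (D : 'I_n -> H -> H)
  (z : 'I_n -> H) (f : 'rV[int]_n -> PS H n) (alpha : 'I_n -> 'rV[int]_n)
  (j l r t : 'I_n) : PS H n :=
  let A := Amat Om z f alpha in
  fun m => dPS D r (A j l t) m - dPS D t (A j l r) m
           + \sum_(k < n) (mulPS (A j k r) (A k l t) m - mulPS (A j k t) (A k l r) m).

(* Write g = alpha_j - alpha_i, beta_k = alpha_j - alpha_k, gamma_k = alpha_k - alpha_i
   and w_b = d log Z(b).  Since w_g is closed, dA_ji = C df^g ^ w_g with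
   C = (-1)^<alpha_j,alpha_i> <alpha_j,alpha_i>, while (A ^ A)_ji is a sum over
   k <> i, j of terms f^beta_k f^gamma_k w_beta_k ^ w_gamma_k.  If len g >= p, all
   these coefficients vanish below order p by (i) and subadditivity of len.
   Otherwise expand df^g by the Joyce PDE: below order p only the pairs
   (beta_k, gamma_k) and (gamma_k, beta_k) survive, by (V), and for each k the
   relation (Q) together with Z(b + d) (w_b ^ w_d) = (w_b - w_d) ^ dZ(b + d)
   cancels them against the k-th term of A ^ A.  This is done after multiplying
   by Z(g), which is nonzero because dZ(g) <> 0, but invertible only where f^g
   does not vanish identically. *)

From HB Require Import structures.
From mathcomp Require Import all_boot all_order all_algebra zify ring.
From Stdlib Require Import FunctionalExtensionality.
Import GRing.Theory Num.Theory.
Local Open Scope ring_scope.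

Section Derivation.

Context {R : comUnitRingType} {D : R -> R}.
Hypothesis derivationD : forall x y, D (x + y) = D x + D y.
Hypothesis derivationM : forall x y, D (x * y) = D x * y + x * D y.

Lemma derivation0 : D 0 = 0.
Proof. by apply: (addrI (D 0)); rewrite -derivationD !addr0. Qed.

Lemma derivationN x : D (- x) = - D x.
Proof. by apply: (addrI (D x)); rewrite -derivationD !subrr derivation0. Qed.

Lemma derivation_sum (I : finType) (F : I -> R) : D (\sum_i F i) = \sum_i D (F i).
Proof. exact: (big_morph D derivationD derivation0). Qed.

Lemma derivation1 : D 1 = 0.
Proof. by apply: (addrI (D 1)); rewrite addr0 -{3}[1]mulr1 derivationM mulr1 mul1r. Qed.

Lemma derivation_int (k : int) : D k%:~R = 0.
Proof.
have Dnat (l : nat) : D l%:R = 0.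
  by elim: l => [|l IHl]; rewrite ?derivation0 // -addn1 natrD derivationD IHl derivation1 addr0.
by case: k => l; rewrite ?NegzE ?mulrNz ?derivationN Dnat ?oppr0.
Qed.

Lemma derivation_sign (k : nat) : D ((-1) ^+ k) = 0.
Proof. by rewrite -[(-1) ^+ k](rmorph_sign (intr : int -> R)) derivation_int. Qed.

Lemma derivationMl c x : D c = 0 -> D (c * x) = c * D x.
Proof. by move=> Dc; rewrite derivationM Dc mul0r add0r. Qed.

Lemma derivationV x : x \is a GRing.unit -> D x^-1 = - (x^-1 ^+ 2 * D x).
Proof.
move=> xU; have := derivationM x x^-1; rewrite mulrV // derivation1 => /esym/eqP.
rewrite addrC addr_eq0 => /eqP Dx.
by rewrite -[D _]mul1r -(mulVr xU) -mulrA Dx mulrN expr2 [D x * _]mulrC mulrA.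
Qed.

End Derivation.

Lemma sgnD (R : pzRingType) (x y : int) : sgn R (x + y) = sgn R x * sgn R y.
Proof.
rewrite /sgn -exprD -signr_odd -[in RHS]signr_odd.
by have -> : odd (absz (x + y)) = odd (absz x + absz y) by lia.
Qed.

Lemma sgnN (R : pzRingType) (x : int) : sgn R (- x) = sgn R x.
Proof. by rewrite /sgn abszN. Qed.

Section SkewForm.

Context {n : nat} {Om : 'M[int]_n}.

Lemma pairingBl (b b' c : 'rV[int]_n) : pairing Om (b - b') c = pairing Om b c - pairing Om b' c.
Proof. by rewrite /pairing !mulmxBl mxE [X in _ + X]mxE. Qed.

Lemma pairingBr (b c c' : 'rV[int]_n) : pairing Om b (c - c') = pairing Om b c - pairing Om b c'.
Proof. by rewrite /pairing linearB /= mulmxBr mxE [X in _ + X]mxE. Qed.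

Hypothesis Om_skew : Om^T = - Om.

Lemma pairing_skew (b c : 'rV[int]_n) : pairing Om c b = - pairing Om b c.
Proof.
have tr11 (A : 'M[int]_1) : A 0 0 = A^T 0 0 by rewrite mxE.
by rewrite /pairing tr11 !trmx_mul trmxK Om_skew mulNmx mulmxN mulmxA mxE.
Qed.

Lemma pairing_alt (b : 'rV[int]_n) : pairing Om b b = 0.
Proof. by have := pairing_skew b b; lia. Qed.

Lemma cf_skew (R : pzRingType) (b c : 'rV[int]_n) : cf R Om c b = - cf R Om b c.
Proof. by rewrite /cf pairing_skew sgnN mulrNz mulrN. Qed.

(* The signs match because <a-b, b-c> = <a,b> - <a,c> + <b,c>. *)
Lemma cf_mul_exchange {R : comPzRingType} {a b c : 'rV[int]_n} :
  pairing Om a c * pairing Om (a - b) (b - c) = pairing Om a b * pairing Om b c ->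
  cf R Om a b * cf R Om b c = cf R Om a c * cf R Om (a - b) (b - c).
Proof.
rewrite /cf; have -> : pairing Om (a - b) (b - c)
                      = pairing Om a b - pairing Om a c + pairing Om b c.
  by rewrite pairingBl !pairingBr pairing_alt; ring.
set x := pairing Om a b; set y := pairing Om b c; set u := pairing Om a c.
move=> exch; rewrite mulrACA [RHS]mulrACA -!sgnD -!intrM exch.
by congr (sgn R _ * _); ring.
Qed.

End SkewForm.

Section PowerSeries.

Context {R : comPzRingType} {n : nat}.
Implicit Types (g h : PS R n) (m : mono n).

Lemma mdeg_ge m r : (m r <= mdeg m)%N.
Proof. by rewrite /mdeg (bigD1 r) //= leq_addr. Qed.

Lemma mdeg_split m (a : mono n) : (forall r, a r <= m r)%N ->
  (mdeg a + mdeg (fun r => m r - a r) = mdeg m)%N.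
Proof. by move=> le_am; rewrite /mdeg -big_split; apply: eq_bigr => r _; rewrite /= subnKC. Qed.

Lemma mul0PS g h m : (forall m', g m' = 0) -> mulPS g h m = 0.
Proof. by move=> g0; rewrite /mulPS big1 // => x _; rewrite g0 mul0r. Qed.

Lemma mulPS0 g h m : (forall m', h m' = 0) -> mulPS g h m = 0.
Proof. by move=> h0; rewrite /mulPS big1 // => x _; rewrite h0 mulr0. Qed.

Lemma mulPS_scale {g h g' h' : PS R n} {a b c d : R} :
  (forall m', g' m' = a * g m' * b) -> (forall m', h' m' = c * h m' * d) ->
  forall m, mulPS g' h' m = a * b * c * d * mulPS g h m.
Proof.
by move=> g'E h'E m; rewrite /mulPS mulr_sumr; apply: eq_bigr => x _; rewrite g'E h'E; ring.
Qed.

Lemma inSp_mulPS {a b : nat} {g h} : inSp a g -> inSp b h -> inSp (a + b) (mulPS g h).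
Proof.
move=> ga hb m deg_m; rewrite /mulPS big1 // => x /forallP le_xm.
have := @mdeg_split m (fun r => x r) (fun r => le_xm r).
set u := mdeg (fun r => nat_of_ord (x r)); set v := mdeg _ => deg_split.
case: (ltnP u a) => [/ga -> | le_au]; first by rewrite mul0r.
by rewrite hb ?mulr0 //; rewrite -/v; lia.
Qed.

Lemma inSp_mulPSl {a : nat} {g} h : inSp a g -> inSp a (mulPS g h).
Proof. by move=> ga; rewrite -[a]addn0; apply: inSp_mulPS. Qed.

(* The involution x |-> m - x of the index set exchanges the two factors. *)
Lemma mulPSC g h m : mulPS g h m = mulPS h g m.
Proof.
rewrite /mulPS.
pose inv (x : {ffun 'I_n -> 'I_(mdeg m).+1}) := [ffun r => inord (m r - x r) : 'I_(mdeg m).+1].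
have invE x r : nat_of_ord (inv x r) = (m r - x r)%N.
  by rewrite ffunE inordK // ltnS (leq_trans (leq_subr _ _)) ?mdeg_ge.
rewrite (reindex_onto inv inv) /=; last first.
  move=> x /forallP le_xm; apply/ffunP => r; apply: val_inj.
  by rewrite /= !invE; have := le_xm r; lia.
apply: eq_big => [x | x /andP[_ /eqP invK]].
  apply/andP/forallP => [[_ /eqP <-] r | le_xm]; first by rewrite !invE; lia.
  split; first by apply/forallP => r; rewrite invE; lia.
  by apply/eqP/ffunP => r; apply: val_inj; rewrite /= !invE; have := le_xm r; lia.
have le_xm r : (x r <= m r)%N.
  by have := congr1 (fun y : {ffun _ -> _} => nat_of_ord (y r)) invK; rewrite /= !invE; lia.
rewrite mulrC; congr (h _ * g _); apply: functional_extensionality => r;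
  rewrite invE //; have := le_xm r; lia.
Qed.

Lemma mulPS_neq0l {g h m} : mulPS g h m != 0 -> exists m', g m' != 0.
Proof.
case: (pickP [pred x : {ffun 'I_n -> 'I_(mdeg m).+1} | g (fun r => nat_of_ord (x r)) != 0]).
  by move=> x gx _; exists (fun r => nat_of_ord (x r)).
move=> g0; rewrite /mulPS big1 ?eqxx // => x _.
by have /negbFE/eqP -> := g0 x; rewrite mul0r.
Qed.

Lemma mulPS_neq0r {g h m} : mulPS g h m != 0 -> exists m', h m' != 0.
Proof. by rewrite mulPSC; apply: mulPS_neq0l. Qed.

End PowerSeries.

Section FreeFamily.

Context {n : nat} {alpha : 'I_n -> 'rV[int]_n}.
Hypothesis alpha_free : row_free (\matrix_(k, r) ((alpha k ord0 r)%:~R : rat)).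

Lemma free_int_comb (c : 'I_n -> int) : \sum_k c k *: alpha k = 0 -> forall k, c k = 0.
Proof.
move=> comb0 k.
have /eqP : \row_k' ((c k')%:~R : rat) *m \matrix_(k', r) (alpha k' ord0 r)%:~R = 0.
  apply/rowP => r; have /(congr1 (fun v : 'rV[int]_n => (v 0 r)%:~R : rat)) := comb0.
  rewrite /= !mxE summxE rmorph_sum /= mulr0z => {2}<-.
  by apply: eq_bigr => k' _; rewrite !mxE rmorphM.
rewrite mulmx_free_eq0 // => /eqP/rowP/(_ k); rewrite !mxE => /eqP.
by rewrite intr_eq0 => /eqP.
Qed.

Lemma free_add2_neq a b c d : a != c -> a != d -> alpha a + alpha b != alpha c + alpha d.
Proof.
move=> ac ad; apply/eqP => eq_sum.
pose delta (e k : 'I_n) : int := (k == e)%:R.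
have delta_sum e : \sum_k delta e k *: alpha k = alpha e.
  by rewrite (bigD1 e) //= /delta eqxx scale1r big1 ?addr0 // => k /negPf ->; rewrite scale0r.
have comb0 : \sum_k (delta a k + delta b k - delta c k - delta d k) *: alpha k = 0.
  under eq_bigr => k _ do rewrite !scalerDl !scaleNr.
  by rewrite !big_split /= !sumrN !delta_sum eq_sum addrAC addrK subrr.
have := free_int_comb _ comb0 a; rewrite /delta eqxx (negPf ac) (negPf ad).
by case: (a == b).
Qed.

Lemma free_inj : injective alpha.
Proof.
move=> a b eq_ab; apply/eqP/negPn/negP => ab.
by have := free_add2_neq a a b b ab ab; rewrite eq_ab eqxx.
Qed.

Lemma free_subr_neq0 a b : a != b -> alpha a - alpha b != 0.
Proof. by move=> ab; rewrite subr_eq0; apply: contra ab => /eqP/free_inj ->. Qed.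

Lemma free_subr_cross_neq i j k k' : j != k -> j != k' ->
  alpha j - alpha k != alpha k' - alpha i.
Proof.
move=> jk jk'; apply: contra (free_add2_neq j i k k' jk jk') => /eqP eq_diff.
by rewrite -[alpha j](subrK (alpha k)) eq_diff addrAC subrK addrC.
Qed.

End FreeFamily.

Section Box.

Variable n : nat.
Implicit Types b c : 'rV[int]_n.

Lemma abs_le_len b r : (`|b ord0 r| <= len b)%N.
Proof. by rewrite /len (bigD1 r) //= leq_addr. Qed.

Lemma lenD_le b c : (len (b + c) <= len b + len c)%N.
Proof.
rewrite /len -big_split /=; apply: leq_sum => r _; rewrite mxE.
by move: (b ord0 r) (c ord0 r) => x y; lia.
Qed.

Lemma boxvec_inj Dm : injective (@boxvec n Dm).
Proof.
move=> x y /rowP eq_xy; apply/ffunP => r; apply: val_inj.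
by have := eq_xy r; rewrite !mxE => /addIr [].
Qed.

Lemma boxvec_surj Dm b : (len b <= Dm)%N -> exists x, @boxvec n Dm x = b.
Proof.
move=> le_bD; exists [ffun r => inord (absz (b ord0 r + Dm%:Z))].
apply/rowP => r; rewrite !mxE ffunE; have := abs_le_len b r.
move: (b ord0 r) => x le_xb; rewrite inordK; lia.
Qed.

Lemma sum_boxvec (V : nmodType) (I : finType) (P : pred I) (v : I -> 'rV[int]_n)
    (E : 'rV[int]_n -> V) Dm :
  {in P &, injective v} ->
  (forall b, (forall q, P q -> b != v q) -> E b = 0) ->
  (forall b, (Dm < len b)%N -> E b = 0) ->
  \sum_(x : {ffun 'I_n -> 'I_(2 * Dm).+1}) E (boxvec x) = \sum_(q | P q) E (v q).
Proof.
move=> v_inj E_supp E_len.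
have E_dec b : E b = \sum_(q | P q) (if b == v q then E (v q) else 0).
  case: (pickP [pred q | P q && (b == v q)]) => [q /andP[Pq /eqP bq] | no_q].
    rewrite (bigD1 q) //= bq eqxx big1 ?addr0 // => q' /andP[Pq' q'q].
    by rewrite (inj_in_eq v_inj) // eq_sym (negPf q'q).
  by rewrite E_supp ?big1 // => q Pq; have := no_q q; rewrite /= Pq /= => ->.
under eq_bigr => x _ do rewrite E_dec.
rewrite exchange_big; apply: eq_bigr => q _; rewrite -big_mkcond /=.
case: (leqP (len (v q)) Dm) => [/boxvec_surj [x0 <-] | /E_len ->]; last by rewrite big1.
by rewrite (big_pred1 x0) // => x; rewrite /= (inj_eq (@boxvec_inj Dm)).
Qed.

End Box.

Lemma ZcD (R : pzRingType) n (z : 'I_n -> R) b c : Zc z (b + c) = Zc z b + Zc z c.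
Proof. by rewrite /Zc -big_split; apply: eq_bigr => r _; rewrite mxE intrD mulrDl. Qed.

Section CentralCharge.

Context {R : comUnitRingType} {n : nat} {z : 'I_n -> R}.

Lemma Zc_dlogZ_wedge b d r t :
  Zc z b \is a GRing.unit -> Zc z d \is a GRing.unit ->
  Zc z (b + d) * (dlogZ z b r * dlogZ z d t - dlogZ z b t * dlogZ z d r)
  = ((b + d) 0 t)%:~R * (dlogZ z b r - dlogZ z d r)
    - ((b + d) 0 r)%:~R * (dlogZ z b t - dlogZ z d t).
Proof.
move=> /mulrV Zb1 /mulrV Zd1; rewrite ZcD !mxE !intrD /dlogZ.
move: Zb1 Zd1; set Zb := Zc z b; set Zd := Zc z d => Zb1 Zd1.
pose X : R := (b 0 r)%:~R * (d 0 t)%:~R - (b 0 t)%:~R * (d 0 r)%:~R.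
apply/eqP; rewrite -subr_eq0; apply/eqP.
transitivity ((Zb * Zb^-1 - 1) * (Zd^-1 * X) + (Zd * Zd^-1 - 1) * (Zb^-1 * X)).
  by rewrite /X; ring.
by rewrite Zb1 Zd1 !subrr !mul0r addr0.
Qed.

Context {D : 'I_n -> R -> R}.
Hypothesis DD : forall r x y, D r (x + y) = D r x + D r y.
Hypothesis DM : forall r x y, D r (x * y) = D r x * y + x * D r y.
Hypothesis Dz : forall r t, D r (z t) = (r == t)%:R.

Lemma derivation_Zc b r : D r (Zc z b) = (b 0 r)%:~R.
Proof.
have Dint k : D r k%:~R = 0 := derivation_int (DD r) (DM r) k.
rewrite /Zc (derivation_sum (DD r)) (bigD1 r) //= big1 ?addr0.
  by rewrite (derivationMl (DM r)) // Dz eqxx mulr1.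
by move=> k kr; rewrite (derivationMl (DM r)) // Dz eq_sym (negPf kr) mulr0.
Qed.

Lemma dlogZ_closed b r t : Zc z b \is a GRing.unit ->
  D r (dlogZ z b t) = D t (dlogZ z b r).
Proof.
move=> Zb; rewrite /dlogZ !DM (derivationV (DM r)) //.
rewrite (derivationV (DM t)) // !derivation_Zc.
rewrite (derivation_int (DD r) (DM r)) (derivation_int (DD t) (DM t)) !mulr0 !addr0.
by rewrite !mulNr -!mulrA [_ * (b _ _)%:~R]mulrC.
Qed.

Lemma derivation_closed_wedge c x (w : 'I_n -> R) r t :
  (forall s, D s c = 0) -> D r (w t) = D t (w r) ->
  D r (c * x * w t) - D t (c * x * w r) = c * (D r x * w t - D t x * w r).
Proof. by move=> Dc closed_w; rewrite !DM !Dc closed_w; ring. Qed.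

End CentralCharge.

Section CurvatureJI.

Variables (H : idomainType) (n : nat) (Om : 'M[int]_n) (D : 'I_n -> H -> H)
  (z : 'I_n -> H) (f : 'rV[int]_n -> PS H n) (alpha : 'I_n -> 'rV[int]_n) (i j : 'I_n).

Hypothesis pchar0 : [pchar H] =i pred0.
Hypothesis Om_skew : Om^T = - Om.
Hypothesis DD : forall r x y, D r (x + y) = D r x + D r y.
Hypothesis DM : forall r x y, D r (x * y) = D r x * y + x * D r y.
Hypothesis Dz : forall r t, D r (z t) = (r == t)%:R.
Hypothesis f_order : forall a, a != 0 -> inSp (len a) (f a).
Hypothesis Zc_unit : forall a, a != 0 -> (exists m, f a m != 0) -> Zc z a \is a GRing.unit.
Hypothesis joyce : forall a, a != 0 -> forall r m, D r (f a m) = joyce_rhs Om z f a r m.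
Hypothesis alpha_free : row_free (\matrix_(k, r) ((alpha k ord0 r)%:~R : rat)).
Hypothesis neq_ij : i != j.

Let g := alpha j - alpha i.
Let beta k := alpha j - alpha k.
Let gamma k := alpha k - alpha i.
Let A := Amat Om z f alpha.
Let wedge k r t m := mulPS (A j k r) (A k i t) m - mulPS (A j k t) (A k i r) m.

Lemma g_neq0 : g != 0.
Proof. by apply: free_subr_neq0; rewrite // eq_sym. Qed.

Lemma beta_neq0 {k} : k != j -> beta k != 0.
Proof. by move=> kj; apply: free_subr_neq0; rewrite // eq_sym. Qed.

Lemma gamma_neq0 {k} : k != i -> gamma k != 0.
Proof. exact: free_subr_neq0. Qed.

Lemma beta_add_gamma k : beta k + gamma k = g.
Proof. by rewrite /beta /gamma addrA subrK. Qed.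

Lemma Zc_neq0 {b} : b != 0 -> Zc z b != 0.
Proof.
move=> b0; apply: contra b0 => /eqP Zb0; apply/eqP/rowP => r; rewrite !mxE.
have := derivation_Zc DD DM Dz b r; rewrite Zb0 (derivation0 (DD r)) => /esym/eqP.
have nat_eq0 := (pcharf0P H).1 pchar0.
by case: (b 0 r) => k; rewrite ?NegzE ?mulrNz ?oppr_eq0 nat_eq0 => /eqP ->.
Qed.

Lemma f_eq0_nonunit {a} : a != 0 -> Zc z a \isn't a GRing.unit -> forall m, f a m = 0.
Proof.
by move=> a0 Za m; apply/eqP; move: Za; apply: contraNT => fa0; apply: Zc_unit a0 _; exists m.
Qed.

Lemma curv_jiE r t m : curv Om D z f alpha j i r t m
  = dPS D r (A j i t) m - dPS D t (A j i r) m + \sum_k wedge k r t m.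
Proof. by []. Qed.

Lemma derivation_cf r b c : D r (cf H Om b c) = 0.
Proof.
rewrite /cf (derivationMl (DM r)); last by rewrite /sgn (derivation_sign (DD r) (DM r)).
by have -> := derivation_int (DD r) (DM r) (pairing Om b c); rewrite mulr0.
Qed.

Lemma dA_ji r t m : dPS D r (A j i t) m - dPS D t (A j i r) m
  = cf H Om (alpha j) (alpha i) * (D r (f g m) * dlogZ z g t - D t (f g m) * dlogZ z g r).
Proof.
have ji : j != i by rewrite eq_sym.
rewrite /dPS /A /Amat (negPf ji) -/g.
have [Zg | /(f_eq0_nonunit g_neq0) f0] := boolP (Zc z g \is a GRing.unit); last first.
  by rewrite f0 mulr0 !mul0r !(derivation0 (DD _)) !mul0r subrr mulr0.
apply: (derivation_closed_wedge DM) => [s|]; first exact: derivation_cf.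
exact: dlogZ_closed DD DM Dz _ _ _ Zg.
Qed.

Lemma wedge_triv k r t m : (k == i) || (k == j) -> wedge k r t m = 0.
Proof.
case/orP => /eqP ->; rewrite /wedge /A.
  by rewrite !mulPS0 ?subrr // => m'; rewrite /Amat eqxx.
by rewrite !mul0PS ?subrr // => m'; rewrite /Amat eqxx.
Qed.

Lemma wedgeE k r t m : k != i -> k != j ->
  wedge k r t m = cf H Om (alpha j) (alpha k) * cf H Om (alpha k) (alpha i)
    * mulPS (f (beta k)) (f (gamma k)) m
    * (dlogZ z (beta k) r * dlogZ z (gamma k) t - dlogZ z (beta k) t * dlogZ z (gamma k) r).
Proof.
move=> ki kj; have jk : j != k by rewrite eq_sym.
have Ajk s m' : A j k s m' = cf H Om (alpha j) (alpha k) * f (beta k) m' * dlogZ z (beta k) s.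
  by rewrite /A /Amat (negPf jk).
have Aki s m' : A k i s m' = cf H Om (alpha k) (alpha i) * f (gamma k) m' * dlogZ z (gamma k) s.
  by rewrite /A /Amat (negPf ki).
by rewrite /wedge !(mulPS_scale (Ajk _) (Aki _)); ring.
Qed.

Lemma curv_ji_len_ge p r t : (p <= len g)%N -> inSp p (curv Om D z f alpha j i r t).
Proof.
move=> le_pg m deg_m; have deg_g : (mdeg m < len g)%N by apply: leq_trans le_pg.
rewrite curv_jiE dA_ji f_order ?g_neq0 // !(derivation0 (DD _)) !mul0r subrr mulr0 add0r.
apply: big1 => k _; have [/andP[ki kj] | ] := boolP ((k != i) && (k != j)); last first.
  by rewrite negb_and !negbK => /wedge_triv.
have beta_gamma_ord := inSp_mulPS (f_order _ (beta_neq0 kj)) (f_order _ (gamma_neq0 ki)).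
rewrite wedgeE // beta_gamma_ord ?mulr0 ?mul0r //.
by apply: (leq_trans deg_g); rewrite -{1}(beta_add_gamma k) lenD_le.
Qed.

Variable p : nat.
Hypothesis pairing_rel : forall k, k != i -> k != j ->
  pairing Om (alpha j) (alpha i) * pairing Om (alpha j - alpha k) (alpha k - alpha i)
  = pairing Om (alpha j) (alpha k) * pairing Om (alpha k) (alpha i).
Hypothesis other_pairs_small : forall b c : 'rV[int]_n, b != 0 -> c != 0 ->
  b + c = alpha j - alpha i ->
  ~ (exists k, [/\ k != i, k != j &
       (b = alpha j - alpha k /\ c = alpha k - alpha i) \/
       (b = alpha k - alpha i /\ c = alpha j - alpha k)]) ->
  inSp p (fun m => (pairing Om b c)%:~R * mulPS (f b) (f c) m).

(* The summand of the Joyce PDE for f^g, as a function of the first vector b. *)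
Let E s m b := if (b != 0) && (g - b != 0)
  then cf H Om b (g - b) * mulPS (f b) (f (g - b)) m * dlogZ z b s else 0.

Lemma E_len_gt s m b : (mdeg m < len b)%N -> E s m b = 0.
Proof.
move=> deg_b; rewrite /E; case: ifP => // /andP[b0 _].
by rewrite (inSp_mulPSl _ (f_order _ b0)) ?mulr0 ?mul0r.
Qed.

Lemma E_other s m b : (mdeg m < p)%N ->
  (forall k, k != i -> k != j -> b != beta k /\ b != gamma k) -> E s m b = 0.
Proof.
move=> deg_m not_pair; rewrite /E; case: ifP => // /andP[b0 c0].
have bc : b + (g - b) = alpha j - alpha i by rewrite addrC subrK.
have bc0 := other_pairs_small _ _ b0 c0 bc _ m deg_m.
rewrite /cf -(mulrA (sgn H _)) bc0 ?mulr0 ?mul0r // => -[k [ki kj [[bk _] | [bk _]]]];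
  by have := not_pair k ki kj; rewrite bk eqxx; case.
Qed.

Lemma joyce_ji s m : (mdeg m < p)%N ->
  D s (f g m) = - \sum_(k | (k != i) && (k != j)) (E s m (beta k) + E s m (gamma k)).
Proof.
move=> deg_m; rewrite joyce ?g_neq0 //; congr (- _).
transitivity (\sum_(x : {ffun 'I_n -> 'I_(2 * mdeg m).+1}) E s m (boxvec x)); first by [].
pose v (q : 'I_n * bool) := if q.2 then gamma q.1 else beta q.1.
rewrite (@sum_boxvec n _ _ [pred q | (q.1 != i) && (q.1 != j)] v).
- rewrite big_mkcond.
  rewrite -(pair_bigA _ (fun k c => if (k != i) && (k != j) then E s m (v (k, c)) else 0)).
  rewrite [RHS]big_mkcond; apply: eq_bigr => k _.
  by rewrite big_bool /=; case: ifP; rewrite ?addr0 // addrC.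
- move=> [k c] [k' c'] /andP[_ /= /[1!eq_sym] jk] /andP[_ /= /[1!eq_sym] jk'].
  have cross := free_subr_cross_neq alpha_free i.
  case: c c' => [] []; rewrite /v /=.
  + by move/addIr/(free_inj alpha_free) ->.
  + by move/esym/eqP; rewrite (negPf (cross _ _ _ jk' jk)).
  + by move/eqP; rewrite (negPf (cross _ _ _ jk jk')).
  + by move/addrI/oppr_inj/(free_inj alpha_free) ->.
- move=> b not_v; apply: E_other => // k ki kj.
  by split; [apply: (not_v (k, false)) | apply: (not_v (k, true))]; rewrite /= ki kj.
- exact: E_len_gt.
Qed.

Lemma wedge_joyce k r t m : k != i -> k != j ->
  Zc z g * wedge k r t m = cf H Om (alpha j) (alpha i)
    * ((g 0 t)%:~R * (E r m (beta k) + E r m (gamma k))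
       - (g 0 r)%:~R * (E t m (beta k) + E t m (gamma k))).
Proof.
move=> ki kj; set M := mulPS (f (beta k)) (f (gamma k)) m.
have g_beta : g - beta k = gamma k by rewrite -(beta_add_gamma k) addrC addKr.
have g_gamma : g - gamma k = beta k by rewrite -(beta_add_gamma k) addrK.
have Ebeta s : E s m (beta k) = cf H Om (beta k) (gamma k) * M * dlogZ z (beta k) s.
  by rewrite /E g_beta (beta_neq0 kj) (gamma_neq0 ki).
have Egamma s : E s m (gamma k) = - (cf H Om (beta k) (gamma k) * M * dlogZ z (gamma k) s).
  by rewrite /E g_gamma (beta_neq0 kj) (gamma_neq0 ki) mulPSC (cf_skew Om_skew) !mulNr.
rewrite wedgeE // !Ebeta !Egamma (cf_mul_exchange Om_skew (pairing_rel _ ki kj)) -/M.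
have [-> | M_neq0] := eqVneq M 0; first by rewrite !mulr0 !mul0r; ring.
have Zbeta := Zc_unit _ (beta_neq0 kj) (mulPS_neq0l M_neq0).
have Zgamma := Zc_unit _ (gamma_neq0 ki) (mulPS_neq0r M_neq0).
rewrite -!(beta_add_gamma k) -/(beta k) -/(gamma k).
transitivity (cf H Om (alpha j) (alpha i) * cf H Om (beta k) (gamma k) * M
  * (Zc z (beta k + gamma k) * (dlogZ z (beta k) r * dlogZ z (gamma k) t
                           - dlogZ z (beta k) t * dlogZ z (gamma k) r))); first ring.
by rewrite Zc_dlogZ_wedge //; ring.
Qed.

Lemma curv_ji_pairs r t : inSp p (curv Om D z f alpha j i r t).
Proof.
move=> m deg_m.
suff : Zc z g * curv Om D z f alpha j i r t m = 0.
  by move/eqP; rewrite mulf_eq0 (negPf (Zc_neq0 g_neq0)) => /eqP.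
have Zc_dlogZ s s' : Zc z g * (D s (f g m) * dlogZ z g s') = D s (f g m) * (g 0 s')%:~R.
  have [Zg | /(f_eq0_nonunit g_neq0) f0] := boolP (Zc z g \is a GRing.unit).
    by rewrite /dlogZ mulrCA mulVKr.
  by rewrite f0 (derivation0 (DD _)) !mul0r mulr0.
have sum_wedge : \sum_k Zc z g * wedge k r t m
    = \sum_(k | (k != i) && (k != j)) cf H Om (alpha j) (alpha i)
        * ((g 0 t)%:~R * (E r m (beta k) + E r m (gamma k))
           - (g 0 r)%:~R * (E t m (beta k) + E t m (gamma k))).
  rewrite [RHS]big_mkcond; apply: eq_bigr => k _.
  case: ifP => [/andP[ki kj] | /negbT]; first exact: wedge_joyce.
  by rewrite negb_and !negbK => /wedge_triv ->; rewrite mulr0.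
rewrite curv_jiE mulrDr mulr_sumr sum_wedge -mulr_sumr sumrB -!mulr_sumr.
by rewrite dA_ji mulrCA mulrBr !Zc_dlogZ !joyce_ji //; ring.
Qed.

End CurvatureJI.

Theorem lemma3p6 (H : idomainType) (n : nat) (Om : 'M[int]_n)
  (D : 'I_n -> H -> H) (z : 'I_n -> H) (f : 'rV[int]_n -> PS H n)
  (alpha : 'I_n -> 'rV[int]_n) (i j : 'I_n) (p : nat) :
  [pchar H] =i pred0 ->
  Om^T = - Om ->
  (forall r x y, D r (x + y) = D r x + D r y) ->
  (forall r x y, D r (x * y) = D r x * y + x * D r y) ->
  (forall r t x, D r (D t x) = D t (D r x)) ->
  (forall r t, D r (z t) = (r == t)%:R) ->
  (forall a, a != 0 -> inSp (len a) (f a)) ->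
  (forall a, a != 0 -> (exists m, f a m != 0) -> Zc z a \is a GRing.unit) ->
  (forall a, a != 0 -> forall r m, D r (f a m) = joyce_rhs Om z f a r m) ->
  row_free (\matrix_(k, r) ((alpha k ord0 r)%:~R : rat)) ->
  i != j -> (3 <= p)%N ->
  ((p <= len (alpha j - alpha i))%N \/
   ((forall k, k != i -> k != j ->
       pairing Om (alpha j) (alpha i)
         * pairing Om (alpha j - alpha k) (alpha k - alpha i)
       = pairing Om (alpha j) (alpha k) * pairing Om (alpha k) (alpha i)) /\
    (forall b c : 'rV[int]_n, b != 0 -> c != 0 -> b + c = alpha j - alpha i ->
       ~ (exists k, [/\ k != i, k != j &
            (b = alpha j - alpha k /\ c = alpha k - alpha i) \/
            (b = alpha k - alpha i /\ c = alpha j - alpha k)]) ->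
       inSp p (fun m => (pairing Om b c)%:~R * mulPS (f b) (f c) m)))) ->
  forall r t : 'I_n, inSp p (curv Om D z f alpha j i r t).
Proof.
(* Nor is p >= 3. *)
move=> pchar0 Om_skew DD DM _ Dz f_order Zc_unit joyce alpha_free neq_ij _.
case=> [len_ge | [pairing_rel other_pairs_small]] r t.
  exact: curv_ji_len_ge.
exact: curv_ji_pairs.
Qed.
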